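(* If $\mathcal{F}$ is a strong regular facets-pairing structure on $\mathcal{C}^n$, then for every proper face $f$ of $\mathcal{C}^n$ the number of faces in the face family $\widehat f$ is a power of $2$.
   Context: Let $[\pm n]=\{\pm1,\dots,\pm n\}$ and $\mathcal{C}^n=\{x\in\mathbb{R}^n: -\tfrac14\le x_i\le\tfrac14\}$. For $1\le i\le n$, $\mathbf{F}(i)$ and $\mathbf{F}(-i)$ denote the facets of $\mathcal{C}^n$ in $\{x_i=\tfrac14\}$ and $\{x_i=-\tfrac14\}$; for $j_1,\dots,j_s\in[\pm n]$ with distinct absolute values, $\mathbf{F}(j_1,\dots,j_s)=\bigcap_i\mathbf{F}(j_i)$ (every proper face has this form). A signed permutation is a bijection $\sigma$ of $[\pm n]$ with $\sigma(-k)=-\sigma(k)$. A facets-pairing structure on $\mathcal{C}^n$ is a pair $(\omega,\{\tau_j\})$ where $\omega$ is a bijection of $[\pm n]$ with $\omega\circ\omega=\mathrm{id}$ and $\tau_j:\mathbf{F}(j)\to\mathbf{F}(\omega(j))$ are face-preserving homeomorphisms with $\tau_{\omega(j)}=\tau_j^{-1}$, such that for all $|j|\ne|k|$, writing $\tau_j(\mathbf{F}(j,k))=\mathbf{F}(\omega(j),k')$ and $\tau_k(\mathbf{F}(j,k))=\mathbf{F}(j',\omega(k))$, one has $\tau_{k'}\tau_j(p)=\tau_{j'}\tau_k(p)$ for all $p\in\mathbf{F}(j,k)$. It is regular if each $\tau_j$ is a Euclidean isometry and $\omega$ is a signed permutation. A composition $\tau_{k_m}\circ\dots\circ\tau_{k_1}$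 applied to a proper face $f$ is valid if $f\subset\mathbf{F}(k_1)$ and $\tau_{k_i}\circ\dots\circ\tau_{k_1}(f)\subset\mathbf{F}(k_{i+1})$ for $1\le i<m$ ($m=0$ allowed). The face family $\widehat f$ is the set of faces $\tau_{k_m}\circ\dots\circ\tau_{k_1}(f)$ over all valid compositions. For a proper face $f$ let $\Xi(f)$ be the set of facets containing $f$. If $f\subset\mathbf{F}(k)$ and $f'=\tau_k(f)$, define $\Psi^f_k:\Xi(f)\to\Xi(f')$ by $\Psi^f_k(\mathbf{F}(k))=\mathbf{F}(\omega(k))$ and, for $F'\in\Xi(f)\setminus\{\mathbf{F}(k)\}$, $\Psi^f_k(F')$ is the facet $G$ with $G\cap\mathbf{F}(\omega(k))=\tau_k(F'\cap\mathbf{F}(k))$. $\mathcal{F}$ is strong if for every proper face $f$ and any two valid compositions mapping $f$ onto the same face $\widetilde f$: (a) they agree at every point of $f$; and (b) the corresponding composites of the maps $\Psi$ along the two compositions coincide as maps $\Xi(f)\to\Xi(\widetilde f)$. *)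

From Stdlib Require Import Reals.
From mathcomp Require Import all_boot.
Set Implicit Arguments. Unset Strict Implicit. Unset Printing Implicit Defensive.

(* Signed indices [+-n]: (i, true) stands for +(i+1), (i, false) for -(i+1). *)
Notation sidx n := ('I_n * bool)%type.
Definition sneg n (j : sidx n) : sidx n := (j.1, ~~ j.2).

Notation point n := ('I_n -> R).
Definition sval (b : bool) : R := if b then (Rinv 4)%R else (Ropp (Rinv 4))%R.

Definition cube n (x : point n) : Prop := forall i, (Rle (Ropp (Rinv 4)) (x i) /\ Rle (x i) (Rinv 4)).

Definition facet n (j : sidx n) (x : point n) : Prop :=
  cube x /\ x j.1 = sval j.2.

(* A (nonempty) face is encoded by a sign vector: s i = Some b fixes
   x_i = sval b, s i = None leaves coordinate i free. *)
Notation fvec n := {ffun 'I_n -> option bool}.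
Definition proper_fv n (s : fvec n) : Prop := exists i, s i <> None.
Definition face n (s : fvec n) (x : point n) : Prop :=
  cube x /\ forall i b, s i = Some b -> x i = sval b.

Definition subset n (A B : point n -> Prop) : Prop := forall x, A x -> B x.
Definition same n (A B : point n -> Prop) : Prop := forall x, A x <-> B x.
Definition inter n (A B : point n -> Prop) (x : point n) : Prop := A x /\ B x.
Definition img n (f : point n -> point n) (A : point n -> Prop) (y : point n) : Prop :=
  exists2 x, A x & y = f x.
Definition is_face n (A : point n -> Prop) : Prop :=
  exists2 t : fvec n, proper_fv t & same A (face t).

Definition dist2 n (x y : point n) : R :=
  \big[Rplus/R0]_(i < n) (pow (Rminus (x i) (y i)) 2).

(* Facets-pairing structure (omega, {tau_j}); tau_j is only relevant on F(j). *)
Record facets_pairing n (om : sidx n -> sidx n)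
    (tau : sidx n -> point n -> point n) : Prop := {
  fp_invol : forall j, om (om j) = j;
  fp_maps : forall j x, facet j x -> facet (om j) (tau j x);
  (* tau_{omega j} = tau_j^{-1} (with fp_invol, tau_j is a bijection F(j) -> F(omega j)) *)
  fp_inv : forall j x, facet j x -> tau (om j) (tau j x) = x;
  (* tau_j is continuous on F(j) (its inverse tau_{omega j} is too: homeomorphism) *)
  fp_cont : forall j x, facet j x -> forall eps, Rlt 0 eps ->
     exists2 delta, Rlt 0 delta &
       forall y, facet j y -> Rlt (dist2 x y) delta ->
                 Rlt (dist2 (tau j x) (tau j y)) eps;
  fp_face : forall j s, proper_fv s -> subset (face s) (facet j) ->
     is_face (img (tau j) (face s));
  fp_cycle : forall j k j' k', j.1 <> k.1 ->
     k'.1 <> (om j).1 -> j'.1 <> (om k).1 ->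
     same (img (tau j) (inter (facet j) (facet k)))
          (inter (facet (om j)) (facet k')) ->
     same (img (tau k) (inter (facet j) (facet k)))
          (inter (facet j') (facet (om k))) ->
     forall p, facet j p -> facet k p -> tau k' (tau j p) = tau j' (tau k p)
}.

Definition regular n (om : sidx n -> sidx n)
    (tau : sidx n -> point n -> point n) : Prop :=
  (forall j, om (sneg j) = sneg (om j)) /\
  (forall j x y, facet j x -> facet j y -> dist2 (tau j x) (tau j y) = dist2 x y).

(* tau_{k_m} o ... o tau_{k_1}, for ks = [:: k_1; ...; k_m]. *)
Fixpoint comp n (tau : sidx n -> point n -> point n) (ks : seq (sidx n))
    (x : point n) : point n :=
  match ks with [::] => x | k :: ks' => comp tau ks' (tau k x) end.

Fixpoint valid n (tau : sidx n -> point n -> point n) (A : point n -> Prop)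
    (ks : seq (sidx n)) : Prop :=
  match ks with
  | [::] => True
  | k :: ks' => subset A (facet k) /\ valid tau (img (tau k) A) ks'
  end.

Definition in_family n (tau : sidx n -> point n -> point n) (s t : fvec n) : Prop :=
  proper_fv t /\
  exists ks, valid tau (face s) ks /\ same (img (comp tau ks) (face s)) (face t).

(* One step of Psi^f_k, as a relation between facets (signed indices) j |-> j'. *)
Definition psi_step n (om : sidx n -> sidx n) (tau : sidx n -> point n -> point n)
    (k j j' : sidx n) : Prop :=
  if j == k then j' = om k
  else same (inter (facet j') (facet (om k)))
            (img (tau k) (inter (facet j) (facet k))).

Fixpoint psi_chain n (om : sidx n -> sidx n) (tau : sidx n -> point n -> point n)
    (ks : seq (sidx n)) (j j' : sidx n) : Prop :=
  match ks with
  | [::] => j' = j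
  | k :: ks' => exists2 m, psi_step om tau k j m & psi_chain om tau ks' m j'
  end.

Definition strong n (om : sidx n -> sidx n)
    (tau : sidx n -> point n -> point n) : Prop :=
  forall s : fvec n, proper_fv s -> forall ks1 ks2,
    valid tau (face s) ks1 -> valid tau (face s) ks2 ->
    same (img (comp tau ks1) (face s)) (img (comp tau ks2) (face s)) ->
    (forall x, face s x -> comp tau ks1 x = comp tau ks2 x) /\
    (forall j j1 j2, subset (face s) (facet j) ->
       psi_chain om tau ks1 j j1 -> psi_chain om tau ks2 j j2 -> j1 = j2).

(* For every facet F(a) containing f there is an involution of the face family
   of f: a face t = tau_{k_m} o ... o tau_{k_1}(f) is moved by tau_k, where F(k)
   is the image of F(a) under the composite of the Psi maps along k_1, ..., k_m;
   strongness makes F(k) independent of the chosen composition.  The cycle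
   condition makes these involutions commute, and every face of the family is
   obtained from f by applying them, so the family is an orbit of an elementary
   abelian 2-group and its size is a power of 2. *)

From Stdlib Require Import Reals Lra ClassicalEpsilon.
From mathcomp Require Import all_boot.
Set Implicit Arguments. Unset Strict Implicit. Unset Printing Implicit Defensive.

Lemma sval_inj : injective sval.
Proof. by case; case => //= H; exfalso; lra. Qed.

Lemma sval_neq0 b : sval b <> R0.
Proof. case: b => /= H; lra. Qed.

Lemma sval_range b : Rle (Ropp (Rinv 4)) (sval b) /\ Rle (sval b) (Rinv 4).
Proof. case: b => /=; lra. Qed.

Section Faces.
Variable n : nat.
Implicit Types (s t u w : fvec n) (j k m : sidx n) (A B C : point n -> Prop).

(* The centre of a face: free coordinates are 0, which is never a fixed value
   [sval b], so the face can be read off its centre. *)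
Definition face_centre t : point n :=
  fun i => if t i is Some b then sval b else R0.

Lemma face_centre_in t : face t (face_centre t).
Proof.
split=> [i|i b]; rewrite /face_centre; last by move->.
case: (t i) => [b|]; [exact: sval_range | lra].
Qed.

Lemma face_centre_fixed t i b : face_centre t i = sval b -> t i = Some b.
Proof.
rewrite /face_centre; case: (t i) => [b'|] H; first by rewrite (sval_inj H).
by case: (sval_neq0 (esym H)).
Qed.

Lemma face_sub_fixed t u i b :
  subset (face t) (face u) -> u i = Some b -> t i = Some b.
Proof. by move=> tu ui; apply: face_centre_fixed; apply: (tu _ (face_centre_in t)).2. Qed.

Lemma face_inj t u : same (face t) (face u) -> t = u.
Proof.
move=> tu; apply/ffunP => i.
have ut : subset (face u) (face t) by move=> x /tu.
case ti: (t i) => [b|]; first by rewrite (face_sub_fixed ut ti).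
by case ui: (u i) => [b|] //; rewrite (@face_sub_fixed t u i b) in ti => // x /tu.
Qed.

Definition facet_fv j : fvec n := [ffun i => if i == j.1 then Some j.2 else None].

Definition ridge_fv j k : fvec n :=
  [ffun i => if i == j.1 then Some j.2 else if i == k.1 then Some k.2 else None].

Lemma facet_faceE j x : facet j x <-> face (facet_fv j) x.
Proof.
split=> [[cx xj]|[cx xj]]; split=> //; last by apply: xj; rewrite ffunE eqxx.
by move=> i b; rewrite ffunE; case: eqP => // -> [<-].
Qed.

Lemma sub_facetE t j : subset (face t) (facet j) <-> t j.1 = Some j.2.
Proof.
split=> [tj|tj x [cx xt]]; last by split=> //; apply: xt.
apply: (@face_sub_fixed t (facet_fv j)); last by rewrite ffunE eqxx.
by move=> x /tj /facet_faceE.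
Qed.

Lemma facet_sub_eq j k : subset (facet k) (facet j) -> j = k.
Proof.
move=> kj; have /(sub_facetE _ j) : subset (face (facet_fv k)) (facet j).
  by move=> x /facet_faceE /kj.
by rewrite ffunE; case: eqP => // E [E2]; apply: injective_projections.
Qed.

Lemma facet_coord_eq j k x : facet j x -> facet k x -> j.1 = k.1 -> j = k.
Proof.
case=> _ xj [_ xk] E; rewrite -E xj in xk.
exact: injective_projections E (sval_inj xk).
Qed.

Lemma ridgeE j k : j.1 <> k.1 -> same (inter (facet j) (facet k)) (face (ridge_fv j k)).
Proof.
move=> jk x; split=> [[[cx xj] [_ xk]]|[cx xjk]].
  split=> // i b; rewrite ffunE.
  by case: eqP => [-> [<-] //|_]; case: eqP => // -> [<-].
split; split=> //; apply: xjk; rewrite ffunE ?eqxx //.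
by case: eqP => // E; case: jk.
Qed.

Lemma ridge_proper j k : proper_fv (ridge_fv j k).
Proof. by exists j.1; rewrite ffunE eqxx. Qed.

Lemma ridge_sub_facet j k : j.1 <> k.1 ->
  subset (face (ridge_fv j k)) (facet k).
Proof. by move=> jk x /(ridgeE jk) []. Qed.

Lemma face_between_ridge j k w : j.1 <> k.1 ->
  subset (face (ridge_fv j k)) (face w) -> subset (face w) (facet k) ->
  w = ridge_fv j k \/ subset (facet k) (face w).
Proof.
move=> jk rw wk.
case wj: (w j.1) => [b|].
  left; have: ridge_fv j k j.1 = Some b by exact: face_sub_fixed rw wj.
  rewrite ffunE eqxx => -[eb]; rewrite -eb in wj.
  apply: face_inj => x; split=> [wx|/rw //]; apply/(ridgeE jk).
  by split; [exact: (proj2 (sub_facetE w j) wj) | exact: wk].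
right=> x [cx xk]; split=> // i b wi.
move: (face_sub_fixed rw wi); rewrite ffunE.
case: eqP => [E|_]; first by rewrite E wj in wi.
by case: eqP => // -> [<-].
Qed.

Lemma face_in_facet_split c u :
  subset (face u) (facet c) -> ~ subset (facet c) (face u) ->
  exists2 m, m.1 <> c.1 & subset (face u) (facet m).
Proof.
move=> uc cu; case: (pickP (fun i => (i != c.1) && (u i != None))).
  move=> i /andP [/eqP ic]; case ui: (u i) => [b|] // _.
  by exists (i, b) => //; apply/sub_facetE.
move=> only_c; case: cu => x [cx xc]; split=> // i b ui.
have := only_c i; rewrite ui andbT; case: eqP => // ic _.
by move: ui; rewrite ic (proj1 (sub_facetE u c) uc) => -[<-].
Qed.

Lemma img_same (f : point n -> point n) A B : same A B -> same (img f A) (img f B).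
Proof. by move=> AB y; split=> -[x /AB Ax ->]; exists x. Qed.

Lemma same_sym A B : same A B -> same B A.
Proof. by move=> AB x; split=> /AB. Qed.

Lemma same_trans A B C : same A B -> same B C -> same A C.
Proof. by move=> AB BC x; rewrite AB BC. Qed.

Lemma img_img_eq_on (f g f' g' : point n -> point n) A :
  (forall x, A x -> f' (f x) = g' (g x)) ->
  same (img f' (img f A)) (img g' (img g A)).
Proof.
move=> fg y; split=> -[_ [x Ax ->] ->].
  by rewrite fg //; exists (g x) => //; exists x.
by rewrite -fg //; exists (f x) => //; exists x.
Qed.

Lemma interC A B : same (inter A B) (inter B A).
Proof. by move=> x; split=> -[]. Qed.

End Faces.

Section Compositions.
Variables (n : nat) (om : sidx n -> sidx n) (tau : sidx n -> point n -> point n).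
Implicit Types (A B : point n -> Prop) (ks : seq (sidx n)).

Lemma comp_rcons ks k x : comp tau (rcons ks k) x = tau k (comp tau ks x).
Proof. by elim: ks x => //= k0 ks IH x; rewrite IH. Qed.

Lemma img_comp_cons ks k A :
  same (img (comp tau (k :: ks)) A) (img (comp tau ks) (img (tau k) A)).
Proof.
move=> y; split=> [[x Ax ->]|[z [x Ax ->] ->]]; last by exists x.
by exists (tau k x) => //; exists x.
Qed.

Lemma img_comp_rcons ks k A :
  same (img (comp tau (rcons ks k)) A) (img (tau k) (img (comp tau ks) A)).
Proof.
move=> y; split=> [[x Ax ->]|[z [x Ax ->] ->]].
  by rewrite comp_rcons; exists (comp tau ks x) => //; exists x.
by exists x; rewrite ?comp_rcons.
Qed.

Lemma valid_same ks A B : same A B -> valid tau A ks -> valid tau B ks.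
Proof.
elim: ks A B => [|k ks IH] A B AB //= [Ak vA]; split; first by move=> x /AB /Ak.
by apply: IH vA; apply: img_same.
Qed.

Lemma valid_rcons ks k A :
  valid tau A (rcons ks k) <-> valid tau A ks /\ subset (img (comp tau ks) A) (facet k).
Proof.
elim: ks A => [|k0 ks IH] A /=.
  split=> [[Ak _]|[_ Ak]]; split=> //; first by move=> y [x /Ak ? ->].
  by move=> x Ax; apply: Ak; exists x.
rewrite IH; split=> [[A0 [v Ak]]|[[A0 v] Ak]].
  by split=> // y /img_comp_cons /Ak.
by split=> //; split=> // y /img_comp_cons /Ak.
Qed.

Lemma psi_chain_rcons ks k j m j' :
  psi_chain om tau ks j m -> psi_step om tau k m j' ->
  psi_chain om tau (rcons ks k) j j'.
Proof.
elim: ks j => [|k0 ks IH] j /=; first by move=> -> st; exists j'.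
by case=> m0 st c st'; exists m0 => //; apply: IH.
Qed.

End Compositions.

Definition nonempty n (A : point n -> Prop) : Prop := exists x, A x.

Lemma img_nonempty n (f : point n -> point n) A : nonempty A -> nonempty (img f A).
Proof. by case=> x Ax; exists (f x); exists x. Qed.

Section FacetsPairing.
Variables (n : nat) (om : sidx n -> sidx n) (tau : sidx n -> point n -> point n).
Hypothesis FP : facets_pairing om tau.
Implicit Types (s t u w : fvec n) (j k m : sidx n) (A B P Q : point n -> Prop).

Lemma tau_maps_om j y : facet (om j) y -> facet j (tau (om j) y).
Proof. by move/(fp_maps FP); rewrite (fp_invol FP). Qed.

Lemma tau_om_inv j y : facet (om j) y -> tau j (tau (om j) y) = y.
Proof. by move/(fp_inv FP); rewrite (fp_invol FP). Qed.

Lemma tau_sub_reflect j A B : subset A (facet j) -> subset B (facet j) ->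
  subset (img (tau j) A) (img (tau j) B) -> subset A B.
Proof.
move=> Aj Bj AB x Ax; have [z Bz E] : img (tau j) B (tau j x) by apply: AB; exists x.
by rewrite -(fp_inv FP (Aj _ Ax)) E (fp_inv FP (Bj _ Bz)).
Qed.

Lemma img_tau_inv k P Q : subset P (facet k) ->
  same (img (tau k) P) Q -> same (img (tau (om k)) Q) P.
Proof.
move=> Pk PQ x; split=> [[_ /PQ [y Py ->] ->]|Px]; first by rewrite (fp_inv FP (Pk _ Py)).
by exists (tau k x); [apply/PQ; exists x | rewrite (fp_inv FP (Pk _ Px))].
Qed.

Lemma facet_not_sub_img_ridge j k : j <> k ->
  ~ subset (facet (om k)) (img (tau k) (inter (facet j) (facet k))).
Proof.
move=> jk ok; apply: jk; apply: facet_sub_eq.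
have kjk : subset (facet k) (inter (facet j) (facet k)).
  apply: (tau_sub_reflect (j := k)) => [y //|y [] //|_ [z kz ->]].
  by apply: ok; apply: (fp_maps FP).
by move=> x /kjk [].
Qed.

(* tau_k maps the ridge F(j,k) onto a ridge F(m, omega k): the image is a face
   strictly inside F(omega k), and pulling back the ridge it lies in gives a
   face between F(j,k) and F(k), which cannot be all of F(k). *)
Lemma tau_ridge j k : j.1 <> k.1 ->
  exists2 m, m.1 <> (om k).1 &
    same (inter (facet m) (facet (om k))) (img (tau k) (inter (facet j) (facet k))).
Proof.
move=> jk; set T := img (tau k) (inter (facet j) (facet k)).
have [u _ Tu] := fp_face FP (ridge_proper j k) (ridge_sub_facet jk).
have {}Tu : same T (face u) by apply: same_trans Tu; apply: img_same; apply: ridgeE.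
have Tok : subset T (facet (om k)) by move=> _ [y [_ ky] ->]; apply: (fp_maps FP).
have [m mk Tm] : exists2 m, m.1 <> (om k).1 & subset (face u) (facet m).
  apply: face_in_facet_split => [x /Tu /Tok //|ou].
  by apply: (@facet_not_sub_img_ridge j k) => [E|x /ou /Tu //]; case: jk; rewrite E.
exists m => // x; split=> [Bx|Tx]; last by split; [apply/Tm/Tu | apply: Tok].
set B := inter (facet m) (facet (om k)).
have Bok : subset B (facet (om k)) by move=> y [].
have [w _ Bw] := fp_face FP (ridge_proper m (om k)) (ridge_sub_facet mk).
have {}Bw : same (img (tau (om k)) B) (face w).
  by apply: same_trans Bw; apply: img_same; apply: ridgeE.
have ridge_w : subset (face (ridge_fv j k)) (face w).
  move=> y /(ridgeE jk) jky; apply/Bw; exists (tau k y); last by rewrite (fp_inv FP jky.2).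
  by split; [apply/Tm/Tu | apply: Tok]; exists y.
have wk : subset (face w) (facet k) by move=> y /Bw [z /Bok oz ->]; apply: tau_maps_om.
case: (face_between_ridge jk ridge_w wk) => [ew|kw].
  exists (tau (om k) x); last by rewrite (tau_om_inv (Bok _ Bx)).
  by apply/(ridgeE jk); rewrite -ew; apply/Bw; exists x.
suff okB : subset (facet (om k)) B.
  by case: mk; rewrite (@facet_sub_eq _ m (om k)) // => y /okB [].
apply: (tau_sub_reflect (j := om k)) => // y [z oz ->].
by apply/Bw/kw; apply: tau_maps_om.
Qed.

Lemma psi_step_sub A j k m : subset A (facet j) -> subset A (facet k) ->
  psi_step om tau k j m -> subset (img (tau k) A) (facet m).
Proof.
rewrite /psi_step => Aj Ak; case: eqP => [_ ->|_ st] _ [x Ax ->].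
  exact: (fp_maps FP (Ak _ Ax)).
by have [] : inter (facet m) (facet (om k)) (tau k x) by apply/st; exists x; split; auto.
Qed.

Lemma psi_step_coord A j k m : nonempty A ->
  subset A (facet j) -> subset A (facet k) -> j <> k ->
  psi_step om tau k j m -> m.1 <> (om k).1.
Proof.
rewrite /psi_step => -[x Ax] Aj Ak jk; case: eqP => // _ st E.
have [mx okx] : inter (facet m) (facet (om k)) (tau k x) by apply/st; exists x; split; auto.
rewrite (facet_coord_eq mx okx E) in st.
by apply: (facet_not_sub_img_ridge jk) => y oy; apply/st.
Qed.

Lemma psi_step_exists A j k : nonempty A ->
  subset A (facet j) -> subset A (facet k) -> exists m, psi_step om tau k j m.
Proof.
rewrite /psi_step => -[x Ax] Aj Ak; case: eqP => [_|jk]; first by exists (om k).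
have jk1 : j.1 <> k.1 by move=> E; apply: jk; exact: facet_coord_eq (Aj _ Ax) (Ak _ Ax) E.
by have [m _ st] := tau_ridge jk1; exists m.
Qed.

Lemma psi_step_inj A j1 j2 k m : nonempty A ->
  subset A (facet j1) -> subset A (facet j2) -> subset A (facet k) ->
  psi_step om tau k j1 m -> psi_step om tau k j2 m -> j1 = j2.
Proof.
rewrite /psi_step => -[x Ax] A1 A2 Ak.
case: eqP => [->|k1]; case: eqP => [->|k2] //.
- by move=> em st; subst m; case: (facet_not_sub_img_ridge k2) => y oy; apply/st.
- by move=> st em; subst m; case: (facet_not_sub_img_ridge k1) => y oy; apply/st.
move=> st1 st2; have k11 : j1.1 <> k.1.
  by move=> E; apply: k1; exact: facet_coord_eq (A1 _ Ax) (Ak _ Ax) E.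
have ridge12 : subset (inter (facet j1) (facet k)) (inter (facet j2) (facet k)).
  by apply: (tau_sub_reflect (j := k)) => [y []|y []|y /st1 /st2].
(* The centre of F(j1,k) lies in F(j2), so j2 is j1 or k. *)
have [[_ cj2] _] := ridge12 _ (proj2 (ridgeE k11 _) (face_centre_in _)).
move/face_centre_fixed: cj2.
rewrite ffunE; case: eqP => [E [E2]|_].
  by apply: injective_projections; rewrite ?E ?E2.
by case: eqP => // E [E2]; case: k2; apply: injective_projections; rewrite ?E ?E2.
Qed.

Lemma psi_step_surj A k m : nonempty A ->
  subset A (facet k) -> subset (img (tau k) A) (facet m) ->
  exists2 j, subset A (facet j) & psi_step om tau k j m.
Proof.
move=> [x Ax] Ak Am; rewrite /psi_step.
have [->|mk] := eqVneq m (om k); first by exists k; rewrite ?eqxx.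
have mk1 : m.1 <> (om k).1.
  have Amx : facet m (tau k x) by apply: Am; exists x.
  by move=> E; case/eqP: mk; exact: facet_coord_eq Amx (fp_maps FP (Ak _ Ax)) E.
have [j jk jmk] := tau_ridge mk1.
have {jmk} := img_tau_inv (fun y (my : inter (facet m) (facet (om k)) y) => my.2) (same_sym jmk).
rewrite (fp_invol FP) in jk * => jmk.
exists j; last by case: eqP => [E|_]; [case: jk; rewrite E | apply: same_sym].
suff Ajk : subset A (inter (facet j) (facet k)) by move=> y /Ajk [].
apply: (tau_sub_reflect (j := k)) => // [y [] //|_ [y Ay ->]]; apply/jmk.
by split; [apply: Am; exists y | apply: (fp_maps FP); apply: Ak].
Qed.

Lemma psi_chain_sub ks A j j' : valid tau A ks -> subset A (facet j) ->
  psi_chain om tau ks j j' -> subset (img (comp tau ks) A) (facet j').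
Proof.
elim: ks A j => [|k ks IH] A j /=; first by move=> _ Aj -> _ [x Ax ->]; apply: Aj.
move=> [Ak v] Aj [m st c] _ [x Ax ->].
by apply: (IH _ m v (psi_step_sub Aj Ak st) c); exists (tau k x) => //; exists x.
Qed.

Lemma psi_chain_exists ks A j : nonempty A -> valid tau A ks ->
  subset A (facet j) -> exists j', psi_chain om tau ks j j'.
Proof.
elim: ks A j => [|k ks IH] A j /= neA; first by exists j.
move=> [Ak v] Aj; have [m st] := psi_step_exists neA Aj Ak.
have [j' c] := IH _ m (img_nonempty _ neA) v (psi_step_sub Aj Ak st).
by exists j'; exists m.
Qed.

Lemma psi_chain_inj ks A j1 j2 m : nonempty A -> valid tau A ks ->
  subset A (facet j1) -> subset A (facet j2) ->
  psi_chain om tau ks j1 m -> psi_chain om tau ks j2 m -> j1 = j2.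
Proof.
elim: ks A j1 j2 => [|k ks IH] A j1 j2 neA /=; first by move=> _ _ _ -> ->.
move=> [Ak v] A1 A2 [m1 st1 c1] [m2 st2 c2].
have em : m1 = m2.
  exact: IH (img_nonempty _ neA) v (psi_step_sub A1 Ak st1) (psi_step_sub A2 Ak st2) c1 c2.
by subst m2; exact: psi_step_inj neA A1 A2 Ak st1 st2.
Qed.

Lemma psi_chain_surj ks A m' : nonempty A -> valid tau A ks ->
  subset (img (comp tau ks) A) (facet m') ->
  exists2 j, subset A (facet j) & psi_chain om tau ks j m'.
Proof.
elim: ks A m' => [|k ks IH] A m' neA /=.
  by move=> _ Am; exists m' => // x Ax; apply: Am; exists x.
move=> [Ak v] Am'.
have [m Am c] : exists2 m, subset (img (tau k) A) (facet m) & psi_chain om tau ks m m'.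
  by apply: IH (img_nonempty _ neA) v _ => _ [_ [x Ax ->] ->]; apply: Am'; exists x.
by have [j Aj st] := psi_step_surj neA Ak Am; exists j => //; exists m.
Qed.

Lemma valid_img_face ks s : proper_fv s -> valid tau (face s) ks ->
  exists2 t, proper_fv t & same (img (comp tau ks) (face s)) (face t).
Proof.
elim: ks s => [|k ks IH] s ps /=.
  by move=> _; exists s => // y; split=> [[x sx ->]|sy] //; exists y.
move=> [sk v]; have [u pu su] := fp_face FP ps sk.
have [t pt ut] := IH u pu (valid_same su v).
by exists t => //; apply: same_trans (img_comp_cons _ _ _ _) (same_trans (img_same _ su) ut).
Qed.

Lemma psi_step_cycle A j k j' k' : nonempty A ->
  subset A (facet j) -> subset A (facet k) -> j <> k ->
  psi_step om tau j k k' -> psi_step om tau k j j' ->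
  forall p, A p -> tau k' (tau j p) = tau j' (tau k p).
Proof.
move=> neA Aj Ak jk stk stj p Ap.
have jk1 : j.1 <> k.1 by move=> E; apply: jk; exact: facet_coord_eq (Aj _ Ap) (Ak _ Ap) E.
have k'j := psi_step_coord neA Ak Aj (nesym jk) stk.
have j'k := psi_step_coord neA Aj Ak jk stj.
move: stk stj; rewrite /psi_step; case: eqP => [/esym //|_]; case: eqP => // _ stk stj.
apply: (fp_cycle FP jk1 k'j j'k _ (same_sym stj)) (Aj _ Ap) (Ak _ Ap).
by apply: same_trans (img_same _ (interC _ _)) (same_trans (same_sym stk) (interC _ _)).
Qed.

End FacetsPairing.

Section CommutingInvolutions.
Variables (T : finType) (I : eqType) (f : I -> T -> T).
Hypothesis f_invol : forall a, involutive (f a).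
Hypothesis f_comm : forall a b y, f a (f b y) = f b (f a y).

Fixpoint inv_span (x : T) (L : seq I) : {set T} :=
  if L is a :: L' then inv_span x L' :|: f a @: inv_span x L' else [set x].

Lemma inv_span_self x L : x \in inv_span x L.
Proof. by elim: L => [|a L IH] /=; rewrite ?set11 // inE IH. Qed.

Lemma imset_inv_span a x L : f a @: inv_span x L = inv_span (f a x) L.
Proof.
elim: L x => [|b L IH] x /=; first by rewrite imset_set1.
rewrite imsetU IH -!imset_comp -IH -imset_comp; congr (_ :|: _).
by apply: eq_imset => y /=; apply: f_comm.
Qed.

Lemma inv_span_mem_eq L x y : y \in inv_span x L -> inv_span y L = inv_span x L.
Proof.
elim: L x y => [|a L IH] x y /=; first by rewrite inE => /eqP ->.
rewrite inE => /orP [/IH -> //|/imsetP [z /IH zx ->]].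
rewrite -imset_inv_span zx -imset_comp (eq_imset _ (f_invol a)) imset_id.
exact: setUC.
Qed.

Lemma inv_span_closed a L x y : a \in L -> y \in inv_span x L -> f a y \in inv_span x L.
Proof.
elim: L y => [|b L IH] y //; rewrite in_cons /= !inE.
case: eqP => [->|_] /= aL /orP [yL|/imsetP [z zL ->]].
- by rewrite imset_f ?orbT.
- by rewrite f_invol zL.
- by rewrite IH.
- by rewrite f_comm imset_f ?orbT // IH.
Qed.

(* The images of an orbit under an involution are either the orbit itself or
   a disjoint copy of it, so each generator at most doubles its size. *)
Lemma card_inv_span L x : exists e, #|inv_span x L| = 2 ^ e.
Proof.
elim: L => [|a L [e IH]] /=; first by exists 0; rewrite cards1.
rewrite imset_inv_span.
have [disj|[z]] := set_0Vmem (inv_span x L :&: inv_span (f a x) L).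
  exists e.+1; have := cardsUI (inv_span x L) (inv_span (f a x) L).
  rewrite disj cards0 addn0 -imset_inv_span card_imset; last exact: inv_inj.
  by move=> ->; rewrite IH expnS mul2n addnn.
rewrite inE => /andP [/inv_span_mem_eq zx /inv_span_mem_eq zfx].
by exists e; rewrite -zfx zx setUid.
Qed.

End CommutingInvolutions.

Section StrongPairing.
Variables (n : nat) (om : sidx n -> sidx n) (tau : sidx n -> point n -> point n).
Hypotheses (FP : facets_pairing om tau) (ST : strong om tau).
Variable s : fvec n.
Hypothesis ps : proper_fv s.
Implicit Types (t u : fvec n) (a b j k : sidx n) (ks : seq (sidx n)).

Definition reaches ks t : Prop :=
  valid tau (face s) ks /\ same (img (comp tau ks) (face s)) (face t).

Definition flip_rel a t t' : Prop :=
  [/\ proper_fv t, proper_fv t', subset (face s) (facet a) &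
    exists ks k, [/\ reaches ks t, psi_chain om tau ks a k
                   & same (img (tau k) (face t)) (face t')]].

(* Where no [flip_rel a t _] holds (t outside the family, or F(a) not a facet
   of s), [flip a] is the identity. *)
Definition flip a t : fvec n :=
  match excluded_middle_informative (exists t', flip_rel a t t') with
  | left ex => proj1_sig (constructive_indefinite_description _ ex)
  | right _ => t
  end.

Lemma face_nonempty t : nonempty (face t).
Proof. by exists (face_centre t); apply: face_centre_in. Qed.

Lemma reaches_nil t : reaches [::] t -> t = s.
Proof. by case=> _ st; apply: face_inj => x; split=> [/st [y sy ->]|tx] //; apply/st; exists x. Qed.

Lemma reaches_facet ks t a k : reaches ks t -> subset (face s) (facet a) ->
  psi_chain om tau ks a k -> subset (face t) (facet k).
Proof. by move=> [v st] sa c x /st /(psi_chain_sub FP v sa c). Qed.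

Lemma reaches_rcons ks k t t' : reaches ks t -> subset (face t) (facet k) ->
  same (img (tau k) (face t)) (face t') -> reaches (rcons ks k) t'.
Proof.
move=> [v st] tk tt'; split; first by apply/valid_rcons; split=> // x /st /tk.
exact: same_trans (img_comp_rcons _ _ _ _) (same_trans (img_same _ st) tt').
Qed.

Lemma flip_rel_intro ks t a k : reaches ks t -> proper_fv t ->
  subset (face s) (facet a) -> psi_chain om tau ks a k ->
  exists t', [/\ flip_rel a t t', proper_fv t', reaches (rcons ks k) t'
              & same (img (tau k) (face t)) (face t')].
Proof.
move=> rt pt sa c; have tk := reaches_facet rt sa c.
have [t' pt' tt'] := fp_face FP pt tk.
exists t'; split=> //; last exact: reaches_rcons tt'.
by split=> //; exists ks, k.
Qed.

Lemma flip_rel_functional a t t1 t2 : flip_rel a t t1 -> flip_rel a t t2 -> t1 = t2.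
Proof.
move=> [_ _ sa [ks1 [k1 [[v1 st1] c1 e1]]]] [_ _ _ [ks2 [k2 [[v2 st2] c2 e2]]]].
have [_ psi12] := ST ps v1 v2 (same_trans st1 (same_sym st2)).
rewrite -(psi12 _ _ _ sa c1 c2) in e2.
by apply: face_inj; apply: same_trans (same_sym e1) e2.
Qed.

Lemma flipE a t t' : flip_rel a t t' -> flip a t = t'.
Proof.
move=> r; rewrite /flip; case: excluded_middle_informative => [ex|[]]; last by exists t'.
by apply: flip_rel_functional r; apply: proj2_sig.
Qed.

Lemma flip_out a t : ~ (exists t', flip_rel a t t') -> flip a t = t.
Proof. by rewrite /flip; case: excluded_middle_informative. Qed.

Lemma flip_rel_sym a t t' : flip_rel a t t' -> flip_rel a t' t.
Proof.
move=> [pt pt' sa [ks [k [rt c tt']]]]; have tk := reaches_facet rt sa c.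
split=> //; exists (rcons ks k), (om k); split.
- exact: reaches_rcons tt'.
- by apply: psi_chain_rcons c _; rewrite /psi_step eqxx.
- exact: (img_tau_inv FP tk tt').
Qed.

Lemma flip_involutive a : involutive (flip a).
Proof.
move=> t; have [[t' r]|nr] := classic (exists t', flip_rel a t t'); last by rewrite !flip_out.
by rewrite (flipE r); apply: flipE; apply: flip_rel_sym.
Qed.

Lemma family_flip a t : in_family tau s t -> in_family tau s (flip a t).
Proof.
have [[t' r]|nr] := classic (exists t', flip_rel a t t'); last by rewrite flip_out.
rewrite (flipE r) => _; have [pt' _ _ [ks [k [rt' _ _]]]] := flip_rel_sym r.
by split=> //; exists ks.
Qed.

Lemma flip_out_family a t : ~ in_family tau s t -> flip a t = t.
Proof.
move=> nt; apply: flip_out => -[t' [pt _ _ [ks [k [rt _ _]]]]].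
by apply: nt; split=> //; exists ks.
Qed.

Lemma flip_out_facet a t : ~ subset (face s) (facet a) -> flip a t = t.
Proof. by move=> na; apply: flip_out => -[t' [_ _ sa _]]. Qed.

(* The cycle condition on the ridge through t of the two facets reached from
   F(a) and F(b). *)
Lemma flip_square a b t : in_family tau s t ->
  subset (face s) (facet a) -> subset (face s) (facet b) -> a <> b ->
  exists ta tb tab,
    [/\ flip_rel a t ta, flip_rel b t tb, flip_rel b ta tab & flip_rel a tb tab].
Proof.
move=> [pt [ks rt]] sa sb ab.
have [j cj] := psi_chain_exists FP (face_nonempty s) rt.1 sa.
have [k ck] := psi_chain_exists FP (face_nonempty s) rt.1 sb.
have tj := reaches_facet rt sa cj; have tk := reaches_facet rt sb ck.
have jk : j <> k.
  by move=> E; subst k; apply: ab; exact: (psi_chain_inj FP (face_nonempty s) rt.1 sa sb cj ck).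
have [k' stk] := psi_step_exists FP (face_nonempty t) tk tj.
have [j' stj] := psi_step_exists FP (face_nonempty t) tj tk.
have [ta [rta pta rtka Eta]] := flip_rel_intro rt pt sa cj.
have [tb [rtb ptb rtkb Etb]] := flip_rel_intro rt pt sb ck.
have [tab [rtab _ _ Etab]] := flip_rel_intro rtka pta sb (psi_chain_rcons ck stk).
have [tba [rtba _ _ Etba]] := flip_rel_intro rtkb ptb sa (psi_chain_rcons cj stj).
suff eab : tab = tba by exists ta, tb, tab; rewrite {2}eab.
apply: face_inj; apply: same_trans (same_sym Etab) _.
apply: same_trans (img_same _ (same_sym Eta)) _.
apply: same_trans (img_img_eq_on (psi_step_cycle FP (face_nonempty t) tj tk jk stk stj)) _.
exact: same_trans (img_same _ Etb) Etba.
Qed.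

Lemma flip_comm a b t : flip a (flip b t) = flip b (flip a t).
Proof.
have [ft|nft] := classic (in_family tau s t); last by rewrite !(flip_out_family _ nft).
have [sa|nsa] := classic (subset (face s) (facet a)); last by rewrite !(flip_out_facet _ nsa).
have [sb|nsb] := classic (subset (face s) (facet b)); last by rewrite !(flip_out_facet _ nsb).
have [->|/eqP ab] := eqVneq a b; first by [].
have [ta [tb [tab [ra rb rab rba]]]] := flip_square ft sa sb ab.
by rewrite (flipE ra) (flipE rb) (flipE rab) (flipE rba).
Qed.

Lemma inv_span_family L t : t \in inv_span flip s L -> in_family tau s t.
Proof.
elim: L t => [|a L IH] t /=; rewrite inE.
  by move=> /eqP ->; split=> //; exists [::]; split=> // y; split=> [[x sx ->]|sy] //; exists y.
by case/orP => [/IH //|/imsetP [u /IH fu ->]]; apply: family_flip.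
Qed.

(* Every face of the family is reached by flips: the last step tau_k of a
   composition is a flip across the facet of s whose Psi-image is F(k). *)
Lemma family_inv_span t : in_family tau s t -> t \in inv_span flip s (enum {: sidx n}).
Proof.
move=> [pt [ks rt]]; elim/last_ind: ks t pt rt => [|ks k IH] t pt rt.
  by rewrite (reaches_nil rt) inv_span_self.
have [v0 ks_k] := proj1 (valid_rcons _ _ _ _) rt.1.
have [t0 pt0 st0] := valid_img_face FP ps v0.
have [a sa ca] := psi_chain_surj FP (face_nonempty s) v0 ks_k.
have [t' [r _ _ tt']] := flip_rel_intro (conj v0 st0) pt0 sa ca.
suff -> : t = flip a t0.
  by apply: (inv_span_closed flip_involutive flip_comm); [rewrite mem_enum | exact: IH].
rewrite (flipE r); apply: face_inj; apply: same_trans (same_sym rt.2) _.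
apply: same_trans (img_comp_rcons _ _ _ _) _.
exact: same_trans (img_same _ st0) tt'.
Qed.

End StrongPairing.

Theorem mainTheorem6 (n : nat) (om : sidx n -> sidx n)
    (tau : sidx n -> point n -> point n) :
  facets_pairing om tau -> regular om tau -> strong om tau ->
  forall s : fvec n, proper_fv s ->
  exists (A : {set fvec n}) (e : nat),
    (forall t, t \in A <-> in_family tau s t) /\ #|A| = 2 ^ e.
Proof.
move=> FP _ ST s ps.
have [e card_span] :=
  card_inv_span (flip_involutive FP ST ps) (flip_comm FP ST ps) (enum {: sidx n}) s.
exists (inv_span (flip om tau s) s (enum {: sidx n})), e; split=> // t; split.
  exact: inv_span_family.
exact: family_inv_span.
Qed.
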